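(* Let $X$ be a precubical set and $\alpha$ a dipath on $\vec{|X|}$. Then there is a dipath $\beta$ on $\vec{|X|}$ from $\mathrm{supp}(\alpha(0))_*(0,\ldots,0)$ to $\mathrm{supp}(\alpha(1))_*(0,\ldots,0)$ such that $U(\beta):[0,1]\to|X|$ is cellular and $U(\alpha)$ is homotopic to $U(\beta)$. Moreover, if $\alpha$ is non-constant and $\alpha(0)=\alpha(1)$, then $\beta$ can be taken to be non-constant.
   Context: Streams: a circulation on a space $X$ assigns to each open $V\subset X$ a preorder $\leqslant_V$ such that for every collection $\mathcal{O}$ of open sets, $\leqslant_{\bigcup\mathcal{O}}$ is the preorder with smallest graph containing $\bigcup_{V\in\mathcal{O}}\mathrm{graph}(\leqslant_V)$; a stream is a space with a circulation; a stream map $f:X\to Y$ is continuous with $f(x)\leqslant_V f(y)$ whenever $x\leqslant_{f^{-1}V}y$; $U$ is the forgetful functor to spaces. $\vec\square[1]$ is $[0,1]$ with circulation $x\leqslant_V y$ iff $x\le y$ and $[x,y]\subset V$; a dipath on a stream is a stream map from $\vec\square[1]$. Precubical sets: $\square$ is the smallest subcategory of posets and monotone maps closed under cartesian products (unit $[0]$) containing $\delta_\pm:[0]\to[1]=\{0<1\}$; objects $[1]^n$. A precubical set is a functor $X:\square^{op}\to\mathbf{Set}$, $X_n=X([1]^n)$; $\square[n]=\square(-,[1]^n)$, and $\sigma\in X_n$ corresponds by Yoneda to $\sigma_*:\square[n]\to X$. The geometric realization $|X|=\int^{[1]^n}X_n\cdot\mathbb{I}^n$ (with $\square$-morphisms extended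 linearly) is a CW complex whose $n$-cells have characteristic maps $|\sigma_*|:\mathbb{I}^n=|\square[n]|\to|X|$, $\sigma\in X_n$. Each $x\in|X|$ lies in the interior of a unique closed cell; $\mathrm{supp}(x)\in X_d$ is the corresponding cube, and $\mathrm{supp}(x)_*(0,\ldots,0)$ denotes the vertex $|\mathrm{supp}(x)_*|(0,\ldots,0)\in|X|$. $\vec\square[n]$ is the $n$-fold product of $\vec\square[1]$ in streams; the stream realization is the coend $\vec{|X|}=\int^{[1]^n}X_n\cdot\vec\square[n]$ in streams, with underlying space $|X|$. $[0,1]$ carries the CW structure with vertices $0,1$. *)

From Stdlib Require Import Reals List Relations.
Open Scope R_scope.
Set Implicit Arguments.

Record Stream := {
  scar  : Type;
  sopen : (scar -> Prop) -> Prop;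
  scirc : (scar -> Prop) -> scar -> scar -> Prop   (* V |-> <=_V *)
}.

Definition union {T : Type} (O : (T -> Prop) -> Prop) : T -> Prop :=
  fun x => exists V, O V /\ V x.

Definition IsTopology (T : Type) (opn : (T -> Prop) -> Prop) : Prop :=
  opn (fun _ => True) /\
  (forall O : (T -> Prop) -> Prop, (forall V, O V -> opn V) -> opn (union O)) /\
  (forall U V, opn U -> opn V -> opn (fun x => U x /\ V x)).

(* A circulation: each open V gets a preorder <=_V on V, and for every
   collection O of open sets, <=_(union O) is the smallest preorder containing
   the union of the graphs of the <=_V, V in O (= transitive closure of that
   union, since each <=_V is already reflexive on V). *)
Definition IsCirculation (T : Type) (opn : (T -> Prop) -> Prop)
    (c : (T -> Prop) -> T -> T -> Prop) : Prop :=
  (forall V, opn V ->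
     (forall x y, c V x y -> V x /\ V y) /\
     (forall x, V x -> c V x x) /\
     (forall x y z, c V x y -> c V y z -> c V x z)) /\
  (forall O : (T -> Prop) -> Prop, (forall V, O V -> opn V) ->
     forall x y, c (union O) x y <->
       clos_trans T (fun a b => exists V, O V /\ c V a b) x y).

Definition IsStream (S : Stream) : Prop :=
  IsTopology (@sopen S) /\ IsCirculation (@sopen S) (@scirc S).

Definition continuous (A B : Stream) (f : scar A -> scar B) : Prop :=
  forall V, sopen B V -> sopen A (fun x => V (f x)).

Definition stream_map (A B : Stream) (f : scar A -> scar B) : Prop :=
  continuous A B f /\
  forall V, sopen B V -> forall x y,
    scirc A (fun z => V (f z)) x y -> scirc B V (f x) (f y).

Definition I : Type := { r : R | 0 <= r <= 1 }.

Definition I_open (W : I -> Prop) : Prop :=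
  forall x, W x -> exists eps, eps > 0 /\
    forall y : I, Rabs (proj1_sig y - proj1_sig x) < eps -> W y.

Definition I_circ (V : I -> Prop) (x y : I) : Prop :=
  proj1_sig x <= proj1_sig y /\
  forall z : I, proj1_sig x <= proj1_sig z <= proj1_sig y -> V z.

Definition streamI : Stream := {| scar := I; sopen := I_open; scirc := I_circ |}.

Lemma I0_pf : 0 <= 0 <= 1. Proof. split; [apply Rle_refl | apply Rle_0_1]. Qed.
Lemma I1_pf : 0 <= 1 <= 1. Proof. split; [apply Rle_0_1 | apply Rle_refl]. Qed.
Definition I0 : I := exist _ 0 I0_pf.
Definition I1 : I := exist _ 1 I1_pf.

Lemma clamp_pf (r : R) : 0 <= Rmax 0 (Rmin 1 r) <= 1.
Proof.
  split; [apply Rmax_l|]. apply Rmax_lub; [apply Rle_0_1 | apply Rmin_l].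
Qed.
(* clamping into [0,1]; only ever applied to numbers already in [0,1] *)
Definition mkI (r : R) : I := exist _ (Rmax 0 (Rmin 1 r)) (clamp_pf r).

Record cube_pt (n : nat) := {
  cp : list R;
  cp_len : length cp = n;
  cp_rng : Forall (fun r => 0 <= r <= 1) cp
}.

Definition cube_open (n : nat) (W : cube_pt n -> Prop) : Prop :=
  forall t, W t -> exists eps, eps > 0 /\
    forall s : cube_pt n,
      Forall2 (fun a b => Rabs (a - b) < eps) (cp s) (cp t) -> W s.

Definition cubeS (n : nat) (P : (cube_pt n -> Prop) -> cube_pt n -> cube_pt n -> Prop)
  : Stream := {| scar := cube_pt n; sopen := @cube_open n; scirc := P |}.

Definition proj (n i : nat) (t : cube_pt n) : I := mkI (nth i (cp t) 0).

(* P is the circulation of the n-fold product of \vec\square[1] in streams: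
   characterised by the universal property of the product. *)
Definition IsProductCirc (n : nat)
    (P : (cube_pt n -> Prop) -> cube_pt n -> cube_pt n -> Prop) : Prop :=
  IsCirculation (@cube_open n) P /\
  (forall i, (i < n)%nat -> stream_map (cubeS P) streamI (proj i)) /\
  (forall Z : Stream, IsStream Z ->
     forall g : scar Z -> cube_pt n,
       (forall i, (i < n)%nat -> stream_map Z streamI (fun z => proj i (g z))) ->
       stream_map Z (cubeS P) g).

(* A morphism [1]^m -> [1]^n of the cube category is a list f of length n:
   entry [Some b] = output coordinate constantly b, entry [None] = next input
   coordinate (in order); m = number of [None]s. *)
Definition nones (f : list (option bool)) : nat :=
  length (filter (fun o => match o with None => true | Some _ => false end) f).

(* composite g o f of f : [1]^m -> [1]^n and g : [1]^n -> [1]^p *)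
Fixpoint comp (g f : list (option bool)) : list (option bool) :=
  match g with
  | nil => nil
  | Some b :: g' => Some b :: comp g' f
  | None :: g' => match f with
                  | y :: f' => y :: comp g' f'
                  | nil => None :: comp g' nil
                  end
  end.

(* linear extension f_* : I^m -> I^n *)
Fixpoint app (f : list (option bool)) (t : list R) : list R :=
  match f with
  | nil => nil
  | Some b :: f' => (if b then 1 else 0) :: app f' t
  | None :: f' => match t with
                  | x :: t' => x :: app f' t'
                  | nil => 0 :: app f' nil
                  end
  end.

(* A precubical set, a functor square^op -> Set, presented by the total set of
   cubes, X_n = {x | dim x = n}, and the (contravariant) action of morphisms. *)
Unset Implicit Arguments.
Record PCSet := {
  cube : Type;
  dim : cube -> nat;
  act : list (option bool) -> cube -> cube;
  act_dim : forall f x, dim x = length f -> dim (act f x) = nones f;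
  act_id : forall x, act (repeat None (dim x)) x = x;
  act_comp : forall g f x, dim x = length g -> length f = nones g ->
     act (comp g f) x = act f (act g x)
}.
Arguments dim {p} _.
Arguments act {p} _ _.
Set Implicit Arguments.

Section Real.
Variable X : PCSet.

Record prept := {
  pc : cube X;
  pt : list R;
  pdim : length pt = dim pc;
  prng : Forall (fun r => 0 <= r <= 1) pt
}.

(* generating relation of the coend: (f^* x, t) ~ (x, f_* t) *)
Definition step (p q : prept) : Prop :=
  exists f, dim (pc q) = length f /\ pc p = act f (pc q) /\ pt q = app f (pt p).

Definition pequiv : prept -> prept -> Prop := clos_refl_sym_trans prept step.

Definition realpt : Type :=
  { P : prept -> Prop | exists p, forall q, P q <-> pequiv p q }.

Definition mkpre (s : cube X) (t : cube_pt (dim s)) : prept :=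
  {| pc := s; pt := cp t; pdim := cp_len t; prng := cp_rng t |}.

Lemma class_pf (p : prept) :
  exists p', forall q, pequiv p q <-> pequiv p' q.
Proof. exists p. intro q. split; auto. Qed.

Definition real (s : cube X) (t : cube_pt (dim s)) : realpt :=
  exist _ (fun q => pequiv (@mkpre s t) q) (class_pf (@mkpre s t)).
Arguments real : clear implicits.

Definition real_open (U : realpt -> Prop) : Prop :=
  forall s : cube X, cube_open (fun t : cube_pt (dim s) => U (real s t)).

Definition realS (C : (realpt -> Prop) -> realpt -> realpt -> Prop) : Stream :=
  {| scar := realpt; sopen := real_open; scirc := C |}.

(* C is the circulation of the stream realization (coend in streams) with
   respect to the product circulations P n on I^n: universal property. *)
Definition IsRealCirc
    (P : forall n, (cube_pt n -> Prop) -> cube_pt n -> cube_pt n -> Prop)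
    (C : (realpt -> Prop) -> realpt -> realpt -> Prop) : Prop :=
  IsCirculation real_open C /\
  (forall s : cube X, stream_map (cubeS (P (dim s))) (realS C) (real s)) /\
  (forall Y : Stream, IsStream Y ->
     forall g : realpt -> scar Y,
       (forall s : cube X,
          stream_map (cubeS (P (dim s))) Y (fun t => g (real s t))) ->
       stream_map (realS C) Y g).

Definition dipath (C : (realpt -> Prop) -> realpt -> realpt -> Prop)
    (a : I -> realpt) : Prop :=
  stream_map streamI (realS C) a.

Definition IsSupp (x : realpt) (s : cube X) : Prop :=
  exists t : cube_pt (dim s), Forall (fun r => 0 < r < 1) (cp t) /\ real s t = x.

Lemma zero_rng (n : nat) : Forall (fun r => 0 <= r <= 1) (repeat 0 n).
Proof. induction n; simpl; constructor; auto. exact I0_pf. Qed.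

Definition zero_pt (n : nat) : cube_pt n :=
  {| cp := repeat 0 n; cp_len := repeat_length 0 n; cp_rng := zero_rng n |}.

Definition vertex (s : cube X) : realpt := real s (zero_pt (dim s)).

Definition skel (k : nat) (x : realpt) : Prop :=
  exists (s : cube X) (t : cube_pt (dim s)), (dim s <= k)%nat /\ real s t = x.

(* cellular w.r.t. the CW structure on [0,1] with vertices 0, 1 *)
Definition cellular (b : I -> realpt) : Prop :=
  skel 0 (b I0) /\ skel 0 (b I1) /\ forall u, skel 1 (b u).

Definition homotopic (a b : I -> realpt) : Prop :=
  exists H : I -> I -> realpt,
    (forall U, real_open U -> forall s t, U (H s t) ->
       exists eps, eps > 0 /\ forall s' t' : I,
         Rabs (proj1_sig s' - proj1_sig s) < eps ->
         Rabs (proj1_sig t' - proj1_sig t) < eps -> U (H s' t')) /\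
    (forall s, H s I0 = a s) /\ (forall s, H s I1 = b s).

Definition nonconst (a : I -> realpt) : Prop := exists u v, a u <> a v.

End Real.
Arguments vertex {X} s.
Arguments IsSupp {X} x s.
Arguments cellular {X} b.
Arguments homotopic {X} a b.
Arguments nonconst {X} a.
Arguments dipath {X} C a.
Arguments IsRealCirc {X} P C.

From Pilot Require Import Defs.
From Stdlib Require Import Reals List Relations Lra Lia Classical ClassicalEpsilon
  FunctionalExtensionality PropExtensionality ProofIrrelevance.
(* [app] denotes the action of cube morphisms on coordinates (Defs), not list
   concatenation. *)
Import Pilot.Defs.
Open Scope R_scope.

(* Every point x of |X| lies in the interior of a unique cell supp(x); let
   low(x) = supp(x)_*(0,...,0) be its lowest vertex and hgt(x) the sum of its
   coordinates in that cell.  The heart of the proof is the preorder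
     x <~ y  iff  low x and low y are joined by a non-constant cellular
                  dipath, or low x = low y and (x = y or hgt x < hgt y).
   Inside one cell, coordinatewise ordered points are <~-related, because
   ordered vertices are joined by monotone edge paths [cube_reach].  Hence
   |X| with the indiscrete topology and the circulation <~ is a stream
   receiving every characteristic map, and the universal property of the
   stream realization makes every dipath <~-monotone [dipath_Rrel].  For a
   dipath alpha this yields a cellular dipath beta from low(alpha 0) to
   low(alpha 1), non-constant when alpha is a non-constant loop since hgt
   cannot increase strictly around a loop [cellular_dipath_between].  Finally
   alpha and beta are freely homotopic, their starting points being joined by
   a straight segment in a cell [homotopic_joined]. *)

Definition rng (r : R) : Prop := 0 <= r <= 1.
Definition is01 (r : R) : Prop := r = 0 \/ r = 1.
Definition interior (t : list R) : Prop := Forall (fun r => 0 < r < 1) t.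

Lemma is01_rng (r : R) : is01 r -> rng r.
Proof. unfold is01, rng; intros [-> | ->]; lra. Qed.

Lemma Forall_is01_rng (l : list R) : Forall is01 l -> Forall rng l.
Proof. intro H. eapply Forall_impl; [exact is01_rng | exact H]. Qed.

Lemma interior_rng (t : list R) : interior t -> Forall rng t.
Proof. intro H. eapply Forall_impl; [|exact H]. unfold rng; intros; lra. Qed.

(* The face of I^n carrying a point t: coordinate 0 (resp. 1) is frozen to
   the constant [Some false] (resp. [Some true]), the other coordinates are
   free.  [face_map t] is the corresponding morphism of the cube category,
   [free_coords t] the coordinates of t inside that face, and [floor01]
   sends t to the lowest vertex of the face. *)
Definition face_sym (r : R) : option bool :=
  if Req_dec_T r 0 then Some false else if Req_dec_T r 1 then Some true else None.
Definition is_free (r : R) : bool :=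
  if Req_dec_T r 0 then false else if Req_dec_T r 1 then false else true.
Definition floor01 (r : R) : R := if Req_dec_T r 1 then 1 else 0.

Definition sumR (l : list R) : R := fold_right Rplus 0 l.

Definition face_map (t : list R) : list (option bool) := map face_sym t.
Definition free_coords (t : list R) : list R := filter is_free t.

Inductive coord_spec (r : R) : option bool -> bool -> R -> Prop :=
| CoordZero : r = 0 -> coord_spec r (Some false) false 0
| CoordOne : r = 1 -> coord_spec r (Some true) false 1
| CoordFree : r <> 0 -> r <> 1 -> coord_spec r None true 0.

Lemma coordP (r : R) : coord_spec r (face_sym r) (is_free r) (floor01 r).
Proof.
  unfold face_sym, is_free, floor01.
  destruct (Req_dec_T r 0) as [->|H0].
  - destruct (Req_dec_T 0 1); [lra|]. now constructor.
  - destruct (Req_dec_T r 1) as [->|H1]; now constructor.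
Qed.

Lemma coord_bit (b : bool) :
  face_sym (if b then 1 else 0) = Some b /\ is_free (if b then 1 else 0) = false.
Proof. destruct b; [destruct (coordP 1) | destruct (coordP 0)]; split; auto; lra. Qed.

Lemma floor01_is01 (r : R) : is01 (floor01 r).
Proof. unfold is01. destruct (coordP r); auto. Qed.

Lemma length_face_map (t : list R) : length (face_map t) = length t.
Proof. apply length_map. Qed.

Lemma nones_face_map (t : list R) : nones (face_map t) = length (free_coords t).
Proof.
  induction t as [|a t IH]; auto. unfold nones, face_map, free_coords in *; simpl.
  destruct (coordP a); simpl; auto.
Qed.

Lemma free_coords_app (l1 l2 : list R) :
  free_coords (l1 ++ l2) = free_coords l1 ++ free_coords l2.
Proof. apply filter_app. Qed.

Lemma comp_face_map (f : list (option bool)) (t : list R) :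
  length t = nones f -> comp f (face_map t) = face_map (app f t).
Proof.
  revert t; induction f as [|[b|] f IH]; intros t Ht; simpl; auto.
  - rewrite IH by exact Ht. f_equal. symmetry. apply coord_bit.
  - destruct t as [|a t]; [discriminate|].
    change (S (length t) = S (nones f)) in Ht. simpl. rewrite IH; auto.
Qed.

Lemma free_coords_act (f : list (option bool)) (t : list R) :
  length t = nones f -> free_coords (app f t) = free_coords t.
Proof.
  revert t; induction f as [|[b|] f IH]; intros t Ht; simpl.
  - destruct t; [auto | discriminate].
  - unfold free_coords at 1; simpl. rewrite (proj2 (coord_bit b)). apply IH; auto.
  - destruct t as [|a t]; [discriminate|].
    change (S (length t) = S (nones f)) in Ht.
    unfold free_coords in *; simpl. destruct (is_free a); [f_equal|]; apply IH; lia.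
Qed.

Lemma app_face_map_free (t : list R) : app (face_map t) (free_coords t) = t.
Proof.
  induction t as [|a t IH]; auto. unfold face_map, free_coords in *; simpl.
  destruct (coordP a); simpl; subst; f_equal; auto.
Qed.

Lemma app_face_map_zeros (t : list R) (k : nat) :
  app (face_map t) (repeat 0 k) = map floor01 t.
Proof.
  revert k; induction t as [|a t IH]; intro k; auto. unfold face_map in *; simpl.
  destruct (coordP a); [f_equal; auto | f_equal; auto |].
  destruct k; simpl; f_equal; [apply (IH 0%nat) | apply IH].
Qed.

Lemma face_map_interior (t : list R) :
  interior t -> face_map t = repeat None (length t).
Proof.
  induction 1 as [|a t Ha _ IH]; auto. unfold face_map in *; simpl.
  destruct (coordP a); [lra | lra | f_equal; auto].
Qed.

Lemma free_coords_interior (t : list R) : interior t -> free_coords t = t.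
Proof.
  induction 1 as [|a t Ha _ IH]; auto. unfold free_coords in *; simpl.
  destruct (coordP a); [lra | lra | f_equal; auto].
Qed.

Lemma free_coords_is_interior (t : list R) : Forall rng t -> interior (free_coords t).
Proof.
  induction 1 as [|a t Ha _ IH]; [constructor|]. unfold free_coords in *; simpl.
  destruct (coordP a); auto. constructor; auto. unfold rng in Ha; lra.
Qed.

Lemma free_coords_01 (l : list R) : Forall is01 l -> free_coords l = nil.
Proof.
  induction 1 as [|a l Ha _ IH]; auto. unfold free_coords in *; simpl.
  destruct (coordP a); auto. destruct Ha; contradiction.
Qed.

Lemma floor01_le (t t' : list R) :
  Forall2 Rle t t' -> Forall rng t' -> Forall2 Rle (map floor01 t) (map floor01 t').
Proof.
  induction 1 as [|a b t t' Hab _ IH]; intro Hr; simpl; constructor; inversion Hr; subst; auto.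
  unfold rng in *. destruct (coordP a), (coordP b); lra.
Qed.

Lemma floor01_eq_height (t t' : list R) :
  Forall2 Rle t t' -> Forall rng t -> Forall rng t' -> map floor01 t = map floor01 t' ->
  t = t' \/ sumR (free_coords t) < sumR (free_coords t').
Proof.
  induction 1 as [|a b t t' Hab Htt IH]; intros Ht Ht' E; auto.
  inversion Ht as [|? ? Ha Ht0]; subst. inversion Ht' as [|? ? Hb Ht0']; subst.
  injection E as Ef Et. unfold rng in *.
  assert (Hab' : a = b \/ (if is_free a then a else 0) < (if is_free b then b else 0)).
  { destruct (coordP a), (coordP b); subst; lra. }
  unfold free_coords in *; simpl.
  assert (Hsum : forall c l, sumR (if is_free c then c :: l else l) =
                            (if is_free c then c else 0) + sumR l)
    by (intros c l; destruct (is_free c); simpl; lra).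
  rewrite !Hsum. destruct (IH Ht0 Ht0' Et) as [<-|Hlt], Hab' as [<-|Hc]; auto; right; lra.
Qed.

Section Realization.
Variable X : PCSet.

Lemma cube_pt_eq {n : nat} (a b : cube_pt n) : cp a = cp b -> a = b.
Proof.
  destruct a as [la pa qa], b as [lb pb qb]; simpl; intros ->.
  f_equal; apply proof_irrelevance.
Qed.

Lemma realpt_eq (x y : realpt X) :
  (forall q, proj1_sig x q <-> proj1_sig y q) -> x = y.
Proof.
  destruct x as [Px hx], y as [Py hy]; simpl; intro H.
  assert (Px = Py) as <- by (extensionality q; apply propositional_extensionality; auto).
  f_equal; apply proof_irrelevance.
Qed.

Lemma real_eq_iff (s1 s2 : cube X) (t1 : cube_pt (dim s1)) (t2 : cube_pt (dim s2)) :
  real X s1 t1 = real X s2 t2 <-> pequiv (mkpre X s1 t1) (mkpre X s2 t2).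
Proof.
  split; intro H.
  - change (proj1_sig (real X s1 t1) (mkpre X s2 t2)). rewrite H. apply rst_refl.
  - apply realpt_eq. simpl. intro q. split; intro Hq.
    + apply rst_trans with (mkpre X s1 t1); auto. apply rst_sym; auto.
    + apply rst_trans with (mkpre X s2 t2); auto.
Qed.

Lemma real_ext (s : cube X) (t1 t2 : cube_pt (dim s)) :
  cp t1 = cp t2 -> real X s t1 = real X s t2.
Proof. intro e. now rewrite (cube_pt_eq t1 t2 e). Qed.

Lemma real_surj (x : realpt X) : exists s (t : cube_pt (dim s)), real X s t = x.
Proof.
  destruct x as [Px [p Hp]]. exists (pc p), {| cp := pt p; cp_len := pdim p; cp_rng := prng p |}.
  apply realpt_eq. simpl. intro q. rewrite Hp. destruct p; simpl. tauto.
Qed.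

(* The carrier of a presentation: its open face (as a cube of X) together
   with its free coordinates.  It is invariant under the coend relation, so
   it is an invariant of the points of |X|. *)
Definition carrier (p : prept X) : cube X * list R :=
  (act (face_map (pt p)) (pc p), free_coords (pt p)).

Lemma pequiv_carrier (p q : prept X) : pequiv p q -> carrier p = carrier q.
Proof.
  induction 1 as [p q [f [Hd [Hc Ht]]]| | |]; try congruence.
  unfold carrier. rewrite Ht, Hc.
  assert (Hl : length (pt p) = nones f) by (rewrite (pdim p), Hc; apply act_dim; auto).
  rewrite free_coords_act, <- comp_face_map by auto. f_equal.
  symmetry. apply act_comp; auto. rewrite length_face_map; auto.
Qed.

Lemma real_carrier (s1 s2 : cube X) (t1 : cube_pt (dim s1)) (t2 : cube_pt (dim s2)) :
  real X s1 t1 = real X s2 t2 ->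
  act (face_map (cp t1)) s1 = act (face_map (cp t2)) s2 /\
  free_coords (cp t1) = free_coords (cp t2).
Proof.
  intro E. apply real_eq_iff, pequiv_carrier in E. unfold carrier in E; simpl in E.
  now inversion E.
Qed.

Definition face_cube {s : cube X} (t : cube_pt (dim s)) : cube X :=
  act (face_map (cp t)) s.

Lemma face_cube_dim {s : cube X} (t : cube_pt (dim s)) :
  length (free_coords (cp t)) = dim (face_cube t).
Proof.
  unfold face_cube. rewrite act_dim, nones_face_map; auto.
  rewrite length_face_map. symmetry. apply cp_len.
Qed.

Definition face_pt {s : cube X} (t : cube_pt (dim s)) : cube_pt (dim (face_cube t)) :=
  {| cp := free_coords (cp t); cp_len := face_cube_dim t;
     cp_rng := interior_rng _ (free_coords_is_interior _ (cp_rng t)) |}.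

Lemma face_pt_interior {s : cube X} (t : cube_pt (dim s)) : interior (cp (face_pt t)).
Proof. apply free_coords_is_interior, cp_rng. Qed.

Lemma real_face (s : cube X) (t : cube_pt (dim s)) :
  real X (face_cube t) (face_pt t) = real X s t.
Proof.
  apply real_eq_iff, rst_step. exists (face_map (cp t)). simpl. split; [|split].
  - rewrite length_face_map. symmetry. apply cp_len.
  - reflexivity.
  - symmetry. apply app_face_map_free.
Qed.

Lemma interior_rep (x : realpt X) :
  exists s (t : cube_pt (dim s)), interior (cp t) /\ real X s t = x.
Proof.
  destruct (real_surj x) as [s [t <-]]. exists (face_cube t), (face_pt t).
  split; [apply face_pt_interior | apply real_face].
Qed.

Lemma interior_rep_unique (s1 s2 : cube X) (t1 : cube_pt (dim s1)) (t2 : cube_pt (dim s2)) :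
  real X s1 t1 = real X s2 t2 -> interior (cp t1) -> interior (cp t2) ->
  s1 = s2 /\ cp t1 = cp t2.
Proof.
  intros E H1 H2. apply real_carrier in E.
  rewrite !face_map_interior, !free_coords_interior, !cp_len, !act_id in E by auto.
  exact E.
Qed.

(* Points of I^n given by lists of coordinates (clamped and padded, which is
   harmless for the well-formed lists we use). *)
Definition clampR (r : R) : R := Rmax 0 (Rmin 1 r).

Lemma clampR_id (r : R) : rng r -> clampR r = r.
Proof. unfold clampR, rng; intro. rewrite Rmin_right, Rmax_right; lra. Qed.

Definition cube_list (n : nat) (l : list R) : list R :=
  map clampR (firstn n l ++ repeat 0 (n - length l)).

Lemma cube_list_len (n : nat) (l : list R) : length (cube_list n l) = n.
Proof. unfold cube_list. rewrite length_map, length_app, length_firstn, repeat_length. lia. Qed.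

Lemma cube_list_rng (n : nat) (l : list R) : Forall (fun r => 0 <= r <= 1) (cube_list n l).
Proof.
  apply Forall_forall. intros x Hx. apply in_map_iff in Hx.
  destruct Hx as [y [<- _]]. apply clamp_pf.
Qed.

Definition cube_of (n : nat) (l : list R) : cube_pt n :=
  {| cp := cube_list n l; cp_len := cube_list_len n l; cp_rng := cube_list_rng n l |}.

Lemma cp_cube_of (n : nat) (l : list R) :
  length l = n -> Forall rng l -> cp (cube_of n l) = l.
Proof.
  intros Hl Hr. simpl. unfold cube_list. rewrite firstn_all2 by lia.
  replace (n - length l)%nat with 0%nat by lia. rewrite app_nil_r.
  clear Hl. induction Hr; simpl; auto. rewrite clampR_id by auto. f_equal; auto.
Qed.

Definition realL (s : cube X) (l : list R) : realpt X := real X s (cube_of (dim s) l).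

Lemma realL_real (s : cube X) (t : cube_pt (dim s)) : realL s (cp t) = real X s t.
Proof. apply real_ext, cp_cube_of; [apply cp_len | apply cp_rng]. Qed.

Lemma skel_real (k : nat) (s : cube X) (t : cube_pt (dim s)) :
  (length (free_coords (cp t)) <= k)%nat -> skel k (real X s t).
Proof.
  intro H. exists (face_cube t), (face_pt t). split.
  - rewrite <- face_cube_dim. exact H.
  - apply real_face.
Qed.

Lemma skel_realL (k : nat) (s : cube X) (l : list R) :
  length l = dim s -> Forall rng l -> (length (free_coords l) <= k)%nat ->
  skel k (realL s l).
Proof.
  intros Hl Hr Hk. apply skel_real. rewrite cp_cube_of; auto.
Qed.

Lemma skel_mono (k k' : nat) (x : realpt X) : (k <= k')%nat -> skel k x -> skel k' x.
Proof. intros H [s [t [Hs E]]]. exists s, t. split; auto. lia. Qed.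

Lemma vertex_face (s : cube X) (t : cube_pt (dim s)) :
  vertex (face_cube t) = realL s (map floor01 (cp t)).
Proof.
  apply real_eq_iff, rst_step. exists (face_map (cp t)). simpl. split; [|split].
  - rewrite length_face_map. symmetry. apply cp_len.
  - reflexivity.
  - rewrite app_face_map_zeros. apply (cp_cube_of (dim s)).
    + rewrite length_map. apply cp_len.
    + apply Forall_is01_rng, Forall_map, Forall_forall. intros; apply floor01_is01.
Qed.

Definition rep_sig (x : realpt X) :
  { s : cube X | exists t : cube_pt (dim s), interior (cp t) /\ real X s t = x } :=
  constructive_indefinite_description _ (interior_rep x).
Definition supp (x : realpt X) : cube X := proj1_sig (rep_sig x).
Definition supp_coords (x : realpt X) :
  { t : cube_pt (dim (supp x)) | interior (cp t) /\ real X (supp x) t = x } :=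
  constructive_indefinite_description _ (proj2_sig (rep_sig x)).
Definition low (x : realpt X) : realpt X := vertex (supp x).
Definition hgt (x : realpt X) : R := sumR (cp (proj1_sig (supp_coords x))).

Lemma supp_spec (x : realpt X) (s : cube X) : IsSupp x s -> s = supp x.
Proof.
  intros [t [Ht Et]]. destruct (proj2_sig (supp_coords x)) as [Ht' Et'].
  rewrite <- Et' in Et. apply interior_rep_unique in Et; tauto.
Qed.

Lemma supp_rep (x : realpt X) : exists t : cube_pt (dim (supp x)), real X (supp x) t = x.
Proof. exists (proj1_sig (supp_coords x)). apply (proj2_sig (supp_coords x)). Qed.

Lemma low_real (s : cube X) (t : cube_pt (dim s)) :
  low (real X s t) = realL s (map floor01 (cp t)).
Proof.
  unfold low. rewrite <- (supp_spec _ (face_cube t)); [apply vertex_face|].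
  exists (face_pt t). split; [apply face_pt_interior | apply real_face].
Qed.

Lemma hgt_real (s : cube X) (t : cube_pt (dim s)) :
  hgt (real X s t) = sumR (free_coords (cp t)).
Proof.
  unfold hgt. destruct (supp_coords (real X s t)) as [t0 [H0 E0]]. simpl.
  apply real_carrier in E0. rewrite <- (proj2 E0). now rewrite free_coords_interior.
Qed.

Lemma low_skel (x : realpt X) : skel 0 (low x).
Proof.
  unfold low, vertex. apply skel_real. simpl. rewrite free_coords_01; auto.
  induction (dim (supp x)); simpl; constructor; auto. left; auto.
Qed.
End Realization.
Arguments supp {X} x.
Arguments low {X} x.
Arguments hgt {X} x.

Lemma I_eq (a b : I) : proj1_sig a = proj1_sig b -> a = b.
Proof. destruct a, b; simpl; intros ->; f_equal; apply proof_irrelevance. Qed.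

Lemma Iv (u : I) : 0 <= proj1_sig u <= 1.
Proof. apply (proj2_sig u). Qed.

Lemma mkI_val (r : R) : 0 <= r <= 1 -> proj1_sig (mkI r) = r.
Proof. apply clampR_id. Qed.

Lemma mkI_proj (u : I) : mkI (proj1_sig u) = u.
Proof. apply I_eq, mkI_val, Iv. Qed.

Lemma mkI_0 : mkI 0 = I0.
Proof. apply I_eq. rewrite mkI_val; simpl; lra. Qed.

Lemma mkI_1 : mkI 1 = I1.
Proof. apply I_eq. rewrite mkI_val; simpl; lra. Qed.

Lemma I_circ_trans (V : I -> Prop) (a b c : I) : I_circ V a b -> I_circ V b c -> I_circ V a c.
Proof.
  intros [h1 H1] [h2 H2]. split; [lra|]. intros z Hz.
  destruct (Rle_dec (proj1_sig z) (proj1_sig b)); [apply H1 | apply H2]; lra.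
Qed.

Lemma I_topology : IsTopology I_open.
Proof.
  split; [|split].
  - intros x _. exists 1. split; auto; lra.
  - intros O HO x [V [OV Vx]]. destruct (HO V OV x Vx) as [e [He H]].
    exists e. split; auto. intros y Hy. exists V. split; auto.
  - intros U V HU HV x [Ux Vx]. destruct (HU x Ux) as [e1 [He1 H1]].
    destruct (HV x Vx) as [e2 [He2 H2]]. exists (Rmin e1 e2). split.
    + apply Rmin_glb_lt; auto.
    + intros y Hy. split; [apply H1 | apply H2];
        eapply Rlt_le_trans; eauto; [apply Rmin_l | apply Rmin_r].
Qed.

(* A closed interval [x,y] covered by open sets V in O can be traversed by a
   finite chain of steps, each inside one V: the supremum of the points
   reachable in this way is reachable and cannot lie below y. *)
Section IntervalCover.
Variables (O : (I -> Prop) -> Prop) (x y : I).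
Hypothesis HO : forall V, O V -> I_open V.
Hypothesis Hxy : proj1_sig x <= proj1_sig y.
Hypothesis Hcover : forall z : I, proj1_sig x <= proj1_sig z <= proj1_sig y -> union O z.

Let cover_step (a b : I) : Prop := exists V, O V /\ I_circ V a b.
Let reachable (r : R) : Prop :=
  proj1_sig x <= r <= proj1_sig y /\ clos_refl_trans I cover_step x (mkI r).

Let reachable_end : reachable (proj1_sig y).
Proof.
  assert (Hx := Iv x). assert (Hy := Iv y).
  assert (Hb : bound reachable) by (exists (proj1_sig y); intros r [Hr _]; lra).
  assert (Hstart : reachable (proj1_sig x)).
  { split; [lra|]. rewrite mkI_proj. apply rt_refl. }
  destruct (completeness reachable Hb (ex_intro _ _ Hstart)) as [m [Hub Hlub]].
  assert (Hxm : proj1_sig x <= m) by (apply Hub; exact Hstart).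
  assert (Hmy : m <= proj1_sig y) by (apply Hlub; intros r [Hr _]; lra).
  destruct (Hcover (mkI m)) as [V [OV Vm]]; [rewrite mkI_val; lra|].
  destruct (HO V OV _ Vm) as [eps [Heps Hball]]. rewrite mkI_val in Hball by lra.
  assert (Hr : exists r, reachable r /\ m - eps < r).
  { apply NNPP. intro Hn. assert (m <= m - eps); [|lra].
    apply Hlub. intros r Er. apply Rnot_lt_le. intro Hlt. apply Hn. eauto. }
  destruct Hr as [r [[Hr Hxr] Hrm]].
  assert (Hrm' : r <= m) by (apply Hub; split; auto).
  set (m' := Rmin (proj1_sig y) (m + eps / 2)).
  assert (Hm' : m <= m' <= proj1_sig y /\ m' <= m + eps / 2).
  { unfold m'. split; [split; [apply Rmin_glb; lra | apply Rmin_l] | apply Rmin_r]. }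
  assert (Em' : reachable m').
  { split; [lra|]. apply rt_trans with (mkI r); auto. apply rt_step. exists V.
    split; auto. split; rewrite !mkI_val by lra; [lra|].
    intros z Hz. apply Hball. apply Rabs_def1; lra. }
  assert (m' <= m) by (apply Hub; auto).
  replace (proj1_sig y) with m'; auto.
  unfold m' in *. destruct (Rle_dec (proj1_sig y) (m + eps / 2)).
  - apply Rmin_left; auto.
  - rewrite Rmin_right in * by lra. lra.
Qed.

Lemma interval_cover_chain : clos_trans I cover_step x y.
Proof.
  destruct reachable_end as [_ Hrt]. rewrite mkI_proj in Hrt.
  destruct (Hcover y) as [V [OV Vy]]; [lra|].
  apply clos_rt_t with y; auto. apply t_step. exists V. split; auto.
  split; [lra|]. intros z Hz. replace z with y; auto. apply I_eq; lra.
Qed.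
End IntervalCover.

Lemma I_stream : IsStream streamI.
Proof.
  split; [apply I_topology|]. split.
  - intros V HV. split; [|split].
    + intros x y [Hxy H]. split; apply H; lra.
    + intros x Vx. split; [lra|]. intros z Hz. replace z with x; auto. apply I_eq; lra.
    + intros x y z. apply I_circ_trans.
  - intros O HO x y. split.
    + intros [Hxy H]. apply interval_cover_chain; auto.
    + induction 1 as [a b [V [OV [Hab H]]]|a b c _ IH1 _ IH2].
      * split; auto. intros z Hz. exists V. split; auto.
      * eapply I_circ_trans; eauto.
Qed.

Lemma stream_map_comp (A B D : Stream) (f : scar A -> scar B) (g : scar B -> scar D) :
  stream_map A B f -> stream_map B D g -> stream_map A D (fun x => g (f x)).
Proof.
  intros [cf hf] [cg hg]. split.
  - intros V HV. apply (cf (fun z => V (g z))), cg, HV.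
  - intros V HV x y H. apply hg, hf; auto.
Qed.

Lemma stream_map_ext (A B : Stream) (f g : scar A -> scar B) :
  (forall x, f x = g x) -> stream_map A B f -> stream_map A B g.
Proof. intros E H. replace g with f; auto. extensionality x; auto. Qed.

Lemma stream_map_const (c : I) : stream_map streamI streamI (fun _ => c).
Proof.
  split.
  - intros W HW x Hx. exists 1. split; [lra|]. auto.
  - intros V HV x y [Hxy H]. simpl in *. split; [lra|].
    intros z Hz. replace z with c by (apply I_eq; lra). apply (H x). lra.
Qed.

Lemma stream_map_id : stream_map streamI streamI (fun u => u).
Proof. split; [intros V HV; exact HV | intros V HV x y H; exact H]. Qed.

Lemma clampR_lipschitz (a b : R) : Rabs (clampR a - clampR b) <= Rabs (a - b).
Proof.
  unfold clampR, Rmax, Rmin.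
  repeat destruct Rle_dec; unfold Rabs; repeat destruct Rcase_abs; lra.
Qed.

Section Paths.
Variable X : PCSet.
Variable C : (realpt X -> Prop) -> realpt X -> realpt X -> Prop.

Definition path_cont (b : I -> realpt X) : Prop :=
  forall U, real_open U -> I_open (fun u => U (b u)).

Definition circ_pres (b : I -> realpt X) : Prop :=
  forall V, real_open V -> forall x y, I_circ (fun z => V (b z)) x y -> C V (b x) (b y).

Lemma dipath_cont (b : I -> realpt X) : dipath C b -> path_cont b.
Proof. intros [c _]. exact c. Qed.

Lemma path_cont_reparam (b : I -> realpt X) (phi : R -> R) (k : R) :
  path_cont b -> 0 < k -> (forall r r', Rabs (phi r - phi r') <= k * Rabs (r - r')) ->
  path_cont (fun u => b (mkI (phi (proj1_sig u)))).
Proof.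
  intros cb Hk Hphi U HU x Hx. destruct (cb U HU _ Hx) as [e [He H]].
  exists (e / k). split; [apply Rdiv_lt_0_compat; auto|]. intros y Hy. apply H.
  eapply Rle_lt_trans; [apply clampR_lipschitz|].
  eapply Rle_lt_trans; [apply Hphi|].
  replace e with (k * (e / k)) by (field; lra). apply Rmult_lt_compat_l; auto.
Qed.

Lemma path_cont_paste (f g h : I -> realpt X) :
  path_cont f -> path_cont g ->
  (forall u, proj1_sig u <= 1/2 -> h u = f u) ->
  (forall u, 1/2 <= proj1_sig u -> h u = g u) -> path_cont h.
Proof.
  intros cf cg Hf Hg U HU x Hx.
  assert (Hl : exists e, e > 0 /\ forall y : I, Rabs (proj1_sig y - proj1_sig x) < e ->
                 proj1_sig y <= 1/2 -> U (h y)).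
  { destruct (Rle_dec (proj1_sig x) (1/2)) as [Hx2|Hx2].
    - rewrite Hf in Hx by auto. destruct (cf U HU _ Hx) as [e [He H]].
      exists e. split; auto. intros y Hy Hy2. rewrite Hf; auto.
    - exists (proj1_sig x - 1/2). split; [lra|]. intros y Hy Hy2.
      apply Rabs_def2 in Hy. lra. }
  assert (Hr : exists e, e > 0 /\ forall y : I, Rabs (proj1_sig y - proj1_sig x) < e ->
                 1/2 <= proj1_sig y -> U (h y)).
  { destruct (Rle_dec (1/2) (proj1_sig x)) as [Hx2|Hx2].
    - rewrite Hg in Hx by auto. destruct (cg U HU _ Hx) as [e [He H]].
      exists e. split; auto. intros y Hy Hy2. rewrite Hg; auto.
    - exists (1/2 - proj1_sig x). split; [lra|]. intros y Hy Hy2.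
      apply Rabs_def2 in Hy. lra. }
  destruct Hl as [e1 [He1 H1]], Hr as [e2 [He2 H2]].
  exists (Rmin e1 e2). split; [apply Rmin_glb_lt; auto|]. intros y Hy.
  assert (Hy1 := Rlt_le_trans _ _ _ Hy (Rmin_l e1 e2)).
  assert (Hy2 := Rlt_le_trans _ _ _ Hy (Rmin_r e1 e2)).
  destruct (Rle_dec (proj1_sig y) (1/2)); [apply H1 | apply H2]; auto; lra.
Qed.

Lemma circ_pres_affine (h b : I -> realpt X) (a c : R) (x y : I) (V : realpt X -> Prop) :
  real_open V -> circ_pres b -> 0 < a ->
  (forall u : I, proj1_sig x <= proj1_sig u <= proj1_sig y ->
     0 <= a * proj1_sig u + c <= 1 /\ h u = b (mkI (a * proj1_sig u + c))) ->
  I_circ (fun z => V (h z)) x y -> C V (h x) (h y).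
Proof.
  intros HV cb Ha Hh [Hxy H].
  destruct (Hh x) as [Rx ->]; [lra|]. destruct (Hh y) as [Ry ->]; [lra|].
  apply cb; auto. split; rewrite !mkI_val by auto; [nra|]. intros z Hz.
  assert (Hx' := Iv x). assert (Hy' := Iv y).
  set (r := (proj1_sig z - c) / a).
  assert (Er : r * a = proj1_sig z - c) by (unfold r; field; lra).
  assert (Hrxy : proj1_sig x <= r <= proj1_sig y) by (split; nra).
  set (w := mkI r). assert (Hw : proj1_sig w = r) by (apply mkI_val; lra).
  assert (Hwxy : proj1_sig x <= proj1_sig w <= proj1_sig y) by (rewrite Hw; exact Hrxy).
  destruct (Hh w Hwxy) as [_ Ew].
  replace z with (mkI (a * proj1_sig w + c)).
  - rewrite <- Ew. apply H. exact Hwxy.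
  - apply I_eq. rewrite Hw, mkI_val; [lra|]. assert (Hz2 := Iv z). lra.
Qed.

Definition concat (b1 b2 : I -> realpt X) (u : I) : realpt X :=
  if Rle_dec (proj1_sig u) (1/2) then b1 (mkI (2 * proj1_sig u))
  else b2 (mkI (2 * proj1_sig u - 1)).

Section Concat.
Variables b1 b2 : I -> realpt X.
Hypothesis Hjoin : b1 I1 = b2 I0.

Lemma concat_first_half (u : I) :
  proj1_sig u <= 1/2 -> concat b1 b2 u = b1 (mkI (2 * proj1_sig u)).
Proof. intro H. unfold concat. destruct (Rle_dec (proj1_sig u) (1/2)); [auto | lra]. Qed.

Lemma concat_second_half (u : I) :
  1/2 <= proj1_sig u -> concat b1 b2 u = b2 (mkI (2 * proj1_sig u - 1)).
Proof.
  intro H. unfold concat. destruct (Rle_dec (proj1_sig u) (1/2)); auto.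
  replace (proj1_sig u) with (1/2) by lra.
  replace (2 * (1/2)) with 1 by field. replace (1 - 1) with 0 by ring.
  now rewrite mkI_1, mkI_0.
Qed.

Lemma concat_left (u : I) : concat b1 b2 (mkI (proj1_sig u / 2)) = b1 u.
Proof.
  assert (H := Iv u). rewrite concat_first_half; rewrite mkI_val by lra; [|lra].
  replace (2 * (proj1_sig u / 2)) with (proj1_sig u) by field. now rewrite mkI_proj.
Qed.

Lemma concat_right (u : I) : concat b1 b2 (mkI ((1 + proj1_sig u) / 2)) = b2 u.
Proof.
  assert (H := Iv u). rewrite concat_second_half; rewrite mkI_val by lra; [|lra].
  replace (2 * ((1 + proj1_sig u) / 2) - 1) with (proj1_sig u) by field. now rewrite mkI_proj.
Qed.

Lemma concat_I0 : concat b1 b2 I0 = b1 I0.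
Proof. rewrite concat_first_half; simpl; [|lra]. now rewrite Rmult_0_r, mkI_0. Qed.

Lemma concat_I1 : concat b1 b2 I1 = b2 I1.
Proof.
  unfold concat; simpl. destruct (Rle_dec 1 (1/2)); [lra|].
  replace (2 * 1 - 1) with 1 by ring. now rewrite mkI_1.
Qed.

Lemma concat_cont : path_cont b1 -> path_cont b2 -> path_cont (concat b1 b2).
Proof.
  intros c1 c2. apply path_cont_paste with
    (fun u => b1 (mkI (2 * proj1_sig u))) (fun u => b2 (mkI (2 * proj1_sig u - 1))).
  - apply (path_cont_reparam b1 (fun r => 2 * r) 2 c1); [lra|]. intros r r'.
    replace (2 * r - 2 * r') with (2 * (r - r')) by ring.
    rewrite Rabs_mult, Rabs_right; lra.
  - apply (path_cont_reparam b2 (fun r => 2 * r - 1) 2 c2); [lra|]. intros r r'.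
    replace (2 * r - 1 - (2 * r' - 1)) with (2 * (r - r')) by ring.
    rewrite Rabs_mult, Rabs_right; lra.
  - exact concat_first_half.
  - exact concat_second_half.
Qed.

Lemma concat_dipath (HCc : IsCirculation (@real_open X) C) :
  dipath C b1 -> dipath C b2 -> dipath C (concat b1 b2).
Proof.
  intros [c1 h1] [c2 h2]. split; [apply concat_cont; auto|].
  assert (CL : forall V, real_open V -> forall x y : I, proj1_sig y <= 1/2 ->
            I_circ (fun z => V (concat b1 b2 z)) x y -> C V (concat b1 b2 x) (concat b1 b2 y)).
  { intros V HV x y Hy Hc. apply circ_pres_affine with b1 2 0; auto; [lra|].
    intros u Hu. assert (Hu' := Iv u). rewrite Rplus_0_r.
    split; [lra | apply concat_first_half; lra]. }
  assert (CR : forall V, real_open V -> forall x y : I, 1/2 <= proj1_sig x ->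
            I_circ (fun z => V (concat b1 b2 z)) x y -> C V (concat b1 b2 x) (concat b1 b2 y)).
  { intros V HV x y Hx Hc. apply circ_pres_affine with b2 2 (-1); auto; [lra|].
    intros u Hu. assert (Hu' := Iv u).
    split; [lra | apply concat_second_half; lra]. }
  intros V HV x y Hc.
  destruct (Rle_dec (proj1_sig y) (1/2)); [apply CL; auto|].
  destruct (Rle_dec (1/2) (proj1_sig x)); [apply CR; auto|].
  (* a path crossing the midpoint splits there, by transitivity of <=_V *)
  destruct (proj1 HCc V HV) as [_ [_ Htrans]].
  set (half := mkI (1/2)). assert (Hh : proj1_sig half = 1/2) by (apply mkI_val; lra).
  destruct Hc as [Hxy H]. apply Htrans with (concat b1 b2 half).
  - apply CL; auto; [lra|]. split; [lra|]. intros z Hz. apply H. lra.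
  - apply CR; auto; [lra|]. split; [lra|]. intros z Hz. apply H. lra.
Qed.

Lemma concat_cellular : cellular b1 -> cellular b2 -> cellular (concat b1 b2).
Proof.
  intros [a1 [a2 a3]] [c1 [c2 c3]]. split; [|split].
  - now rewrite concat_I0.
  - now rewrite concat_I1.
  - intro u. unfold concat. destruct (Rle_dec (proj1_sig u) (1/2)); auto.
Qed.

Lemma concat_nonconst : nonconst b1 \/ nonconst b2 -> nonconst (concat b1 b2).
Proof.
  intros [[u [v H]]|[u [v H]]].
  - exists (mkI (proj1_sig u / 2)), (mkI (proj1_sig v / 2)). now rewrite !concat_left.
  - exists (mkI ((1 + proj1_sig u) / 2)), (mkI ((1 + proj1_sig v) / 2)).
    now rewrite !concat_right.
Qed.
End Concat.

Lemma const_dipath (HCc : IsCirculation (@real_open X) C) (c : realpt X) :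
  dipath C (fun _ => c).
Proof.
  split.
  - intros U HU x Hx. exists 1. split; [lra | auto].
  - intros V HV x y [Hxy H]. apply (proj1 HCc V HV). apply (H x). lra.
Qed.

Definition cell_path (v w : realpt X) (b : I -> realpt X) : Prop :=
  dipath C b /\ cellular b /\ b I0 = v /\ b I1 = w.
Definition reach (v w : realpt X) : Prop := exists b, cell_path v w b.
Definition sreach (v w : realpt X) : Prop := exists b, cell_path v w b /\ nonconst b.

Section Reach.
Hypothesis HCc : IsCirculation (@real_open X) C.

Lemma cell_path_concat (u v w : realpt X) (b1 b2 : I -> realpt X) :
  cell_path u v b1 -> cell_path v w b2 -> cell_path u w (concat b1 b2).
Proof.
  intros [d1 [c1 [e1 f1]]] [d2 [c2 [e2 f2]]].
  split; [apply concat_dipath; auto; congruence|].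
  split; [apply concat_cellular; auto|]. now rewrite concat_I0, concat_I1.
Qed.

Lemma reach_refl (v : realpt X) : skel 0 v -> reach v v.
Proof.
  intro H. exists (fun _ => v). split; [apply const_dipath; auto|].
  repeat split; auto. intro; apply (skel_mono X 0); auto.
Qed.

Lemma sreach_reach (u v : realpt X) : sreach u v -> reach u v.
Proof. intros [b [H _]]. exists b; auto. Qed.

Lemma sreach_trans_l (u v w : realpt X) : sreach u v -> reach v w -> sreach u w.
Proof.
  intros [b1 [H1 N1]] [b2 H2]. exists (concat b1 b2). split; [eapply cell_path_concat; eauto|].
  apply concat_nonconst; [|left; exact N1].
  destruct H1 as (_ & _ & _ & E1), H2 as (_ & _ & E2 & _). congruence.
Qed.

End Reach.
End Paths.
Arguments path_cont {X} b.
Arguments circ_pres {X} C b.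
Arguments concat {X} b1 b2 u.
Arguments cell_path {X} C v w b.
Arguments reach {X} C v w.
Arguments sreach {X} C v w.

Lemma nth_rng (l : list R) (i : nat) : Forall rng l -> rng (nth i l 0).
Proof.
  intro H. revert i; induction H as [|a l Ha _ IH]; intro i; destruct i; simpl;
    auto; unfold rng; lra.
Qed.

Lemma proj_cube_of (n i : nat) (l : list R) :
  length l = n -> Forall rng l -> proj i (cube_of n l) = mkI (nth i l 0).
Proof. intros. unfold proj. rewrite cp_cube_of; auto. Qed.

Section Cells.
Variable X : PCSet.
Variable P : forall n, (cube_pt n -> Prop) -> cube_pt n -> cube_pt n -> Prop.
Hypothesis HP : forall n, IsProductCirc (P n).
Variable C : (realpt X -> Prop) -> realpt X -> realpt X -> Prop.
Hypothesis HC : IsRealCirc P C.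

Lemma edge_map (n : nat) (pre a : list R) :
  Forall rng pre -> Forall rng a -> (length pre + S (length a))%nat = n ->
  stream_map streamI (cubeS (P n)) (fun u => cube_of n (pre ++ proj1_sig u :: a)).
Proof.
  intros Hp Ha Hn. destruct (HP n) as [_ [_ Huniv]]. apply Huniv; [apply I_stream|].
  intros i Hi.
  assert (Hl : forall u : I, length (pre ++ proj1_sig u :: a) = n)
    by (intro; rewrite length_app; simpl; lia).
  assert (Hr : forall u : I, Forall rng (pre ++ proj1_sig u :: a)).
  { intro u. apply Forall_app; split; auto. constructor; auto. apply Iv. }
  destruct (Nat.lt_trichotomy i (length pre)) as [Hlt|[Heq|Hgt]].
  - apply stream_map_ext with (fun _ => mkI (nth i pre 0)); [|apply stream_map_const].
    intro u. rewrite proj_cube_of, app_nth1; auto.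
  - apply stream_map_ext with (fun u => u); [|apply stream_map_id].
    intro u. rewrite proj_cube_of, app_nth2, Heq, Nat.sub_diag by (auto; lia).
    symmetry; apply mkI_proj.
  - apply stream_map_ext with (fun _ => mkI (nth (i - length pre - 1) a 0));
      [|apply stream_map_const].
    intro u. rewrite proj_cube_of, app_nth2 by (auto; lia).
    destruct (i - length pre)%nat eqn:E; [lia|]. simpl. do 2 f_equal. lia.
Qed.

Definition edge (s : cube X) (pre a : list R) (u : I) : realpt X :=
  realL X s (pre ++ proj1_sig u :: a).

Section Edge.
Variables (s : cube X) (pre a : list R).
Hypotheses (Hpre : Forall is01 pre) (Ha : Forall is01 a)
  (Hlen : (length pre + S (length a))%nat = dim s).

Let edge_len (r : R) : length (pre ++ r :: a) = dim s.
Proof. rewrite length_app; simpl; lia. Qed.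

Let edge_rng (r : R) : rng r -> Forall rng (pre ++ r :: a).
Proof. intro Hr. apply Forall_app; split; auto using Forall_is01_rng. Qed.

Let edge_free (r : R) : free_coords (pre ++ r :: a) = free_coords (r :: nil).
Proof.
  rewrite free_coords_app, (free_coords_01 pre) by auto. unfold free_coords; simpl.
  fold (free_coords a). rewrite (free_coords_01 a) by auto. now destruct (is_free r).
Qed.

Lemma edge_dipath : dipath C (edge s pre a).
Proof.
  apply (stream_map_comp _ (cubeS (P (dim s)))).
  - apply edge_map; auto using Forall_is01_rng.
  - apply (proj1 (proj2 HC)).
Qed.

Let edge_skel (r : R) (k : nat) :
  rng r -> (length (free_coords (r :: nil)) <= k)%nat -> skel k (realL X s (pre ++ r :: a)).
Proof.
  intros Hr Hk. apply skel_realL; [apply edge_len | apply edge_rng, Hr |].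
  now rewrite edge_free.
Qed.

Lemma edge_cellular : cellular (edge s pre a).
Proof.
  unfold edge; split; [|split]; simpl.
  - apply edge_skel; [unfold rng; lra|]. rewrite free_coords_01; auto.
    constructor; [left|]; auto.
  - apply edge_skel; [unfold rng; lra|]. rewrite free_coords_01; auto.
    constructor; [right|]; auto.
  - intro u. apply edge_skel; [apply Iv|].
    unfold free_coords; simpl. destruct (is_free (proj1_sig u)); simpl; lia.
Qed.

(* The edge is not constant: its midpoint has a free coordinate, its start
   has none. *)
Lemma edge_nonconst : nonconst (edge s pre a).
Proof.
  exists I0, (mkI (1/2)). intro E. unfold edge, realL in E.
  apply real_carrier, proj2 in E. rewrite !cp_cube_of in E by
    (auto; apply edge_rng; rewrite ?mkI_val; simpl; unfold rng; lra).
  rewrite !edge_free, mkI_val in E by lra. simpl in E. unfold free_coords in E; simpl in E.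
  destruct (coordP 0); [|lra|lra]. destruct (coordP (1/2)); [lra|lra|discriminate].
Qed.

Lemma edge_sreach : sreach C (realL X s (pre ++ 0 :: a)) (realL X s (pre ++ 1 :: a)).
Proof.
  exists (edge s pre a). split; [|apply edge_nonconst].
  split; [apply edge_dipath | split; [apply edge_cellular | split; reflexivity]].
Qed.
End Edge.

(* Vertices of a cell, ordered coordinatewise, are joined by a cellular dipath
   (a monotone edge path raising one coordinate at a time), which is
   non-constant when the vertices differ.  Induction on the coordinates not
   yet treated; [pre] holds the coordinates already treated. *)
Lemma cube_reach (s : cube X) :
  forall a b, Forall2 Rle a b -> Forall is01 a -> Forall is01 b ->
  forall pre, Forall is01 pre -> (length pre + length a)%nat = dim s ->
  reach C (realL X s (pre ++ a)) (realL X s (pre ++ b)) /\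
  (a <> b -> sreach C (realL X s (pre ++ a)) (realL X s (pre ++ b))).
Proof.
  assert (HCc := proj1 HC).
  induction 1 as [|x y a b Hxy Hab IH]; intros Ha Hb pre Hp Hn.
  - split; [|congruence]. rewrite app_nil_r in *. apply reach_refl; auto.
    apply skel_realL; [simpl in Hn; lia | apply Forall_is01_rng; auto |].
    rewrite free_coords_01; auto.
  - inversion Ha as [|? ? Hx Ha']; subst. inversion Hb as [|? ? Hy Hb']; subst.
    assert (Hshift : forall z c, pre ++ z :: c = (pre ++ z :: nil) ++ c)
      by (intros; rewrite <- app_assoc; auto).
    assert (IH' : forall z, is01 z ->
      reach C (realL X s (pre ++ z :: a)) (realL X s (pre ++ z :: b)) /\
      (a <> b -> sreach C (realL X s (pre ++ z :: a)) (realL X s (pre ++ z :: b)))).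
    { intros z Hz. rewrite (Hshift z a), (Hshift z b). apply IH; auto.
      - apply Forall_app; split; auto.
      - rewrite length_app. simpl in Hn |- *. lia. }
    destruct (Req_dec_T x y) as [<-|ne].
    + destruct (IH' x Hx) as [R1 R2]. split; auto. intro Hne. apply R2. congruence.
    + (* x = 0 < 1 = y: first climb the edge, then treat the remaining coordinates *)
      assert (x = 0 /\ y = 1) as [-> ->]
        by (destruct Hx as [-> | ->], Hy as [-> | ->]; split; auto; lra).
      assert (S1 : sreach C (realL X s (pre ++ 0 :: a)) (realL X s (pre ++ 1 :: b))).
      { apply (sreach_trans_l X C HCc _ (realL X s (pre ++ 1 :: a))).
        - apply edge_sreach; auto.
        - apply IH'. right; auto. }
      split; auto. apply sreach_reach; auto.
Qed.

Definition Rrel (x y : realpt X) : Prop :=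
  sreach C (low x) (low y) \/ (low x = low y /\ (x = y \/ hgt x < hgt y)).

Lemma Rrel_refl (x : realpt X) : Rrel x x.
Proof. right. auto. Qed.

Lemma Rrel_trans (x y z : realpt X) : Rrel x y -> Rrel y z -> Rrel x z.
Proof.
  assert (HCc := proj1 HC).
  intros [H1|[E1 H1]] [H2|[E2 H2]].
  - left. eapply sreach_trans_l; eauto. apply sreach_reach; auto.
  - left. rewrite <- E2; auto.
  - left. rewrite E1; auto.
  - right. split; [congruence|]. destruct H1 as [->|H1], H2 as [->|H2]; auto.
    right; lra.
Qed.

Lemma Rrel_reach (x y : realpt X) : Rrel x y -> reach C (low x) (low y).
Proof.
  intros [H|[E _]]; [apply sreach_reach; auto|]. rewrite <- E.
  apply reach_refl, low_skel. exact (proj1 HC).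
Qed.

Lemma Forall2_Rle_nth (l1 l2 : list R) : length l1 = length l2 ->
  (forall i, (i < length l1)%nat -> nth i l1 0 <= nth i l2 0) -> Forall2 Rle l1 l2.
Proof.
  revert l2; induction l1 as [|a l1 IH]; intros [|b l2] Hl H; simpl in *; try discriminate.
  - constructor.
  - constructor; [apply (H 0%nat); lia|]. apply IH; [lia|]. intros i Hi. apply (H (S i)); lia.
Qed.

(* The circulation of \vec\square[n] on the whole cube is contained in the
   coordinatewise order, since the projections are stream maps. *)
Lemma P_full_le (n : nat) (t t' : cube_pt n) :
  P n (fun _ => True) t t' -> Forall2 Rle (cp t) (cp t').
Proof.
  intro H. apply Forall2_Rle_nth; [rewrite !cp_len; auto|].
  intros i Hi. rewrite cp_len in Hi. destruct (HP n) as [_ [Hproj _]].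
  destruct (Hproj i Hi) as [_ Hc].
  assert (Ho : I_open (fun _ : I => True)) by (intros x _; exists 1; split; auto; lra).
  destruct (Hc (fun _ => True) Ho t t' H) as [Hle _].
  unfold proj in Hle. rewrite !mkI_val in Hle; auto; apply nth_rng, cp_rng.
Qed.

Lemma cube_Rrel (s : cube X) (t t' : cube_pt (dim s)) :
  Forall2 Rle (cp t) (cp t') -> Rrel (real X s t) (real X s t').
Proof.
  intro Hle. unfold Rrel. rewrite !low_real.
  assert (Hfl : forall t0 : cube_pt (dim s), Forall is01 (map floor01 (cp t0)))
    by (intro; apply Forall_map, Forall_forall; intros; apply floor01_is01).
  destruct (cube_reach s (map floor01 (cp t)) (map floor01 (cp t'))
    (floor01_le _ _ Hle (cp_rng t')) (Hfl t) (Hfl t') nil (Forall_nil _))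
    as [_ Hs]; [simpl; rewrite length_map; apply cp_len|].
  destruct (list_eq_dec Req_dec_T (map floor01 (cp t)) (map floor01 (cp t'))) as [E|NE].
  - right. split; [now rewrite E|].
    destruct (floor01_eq_height _ _ Hle (cp_rng t) (cp_rng t') E) as [E'|Hlt].
    + left. apply real_ext; auto.
    + right. rewrite !hgt_real. auto.
  - left. auto.
Qed.

Definition Yopen (V : realpt X -> Prop) : Prop := (forall x, V x) \/ (forall x, ~ V x).
Definition Ycirc (V : realpt X -> Prop) (x y : realpt X) : Prop := (forall z, V z) /\ Rrel x y.
Definition Ystr : Stream := {| scar := realpt X; sopen := Yopen; scirc := Ycirc |}.

Lemma Y_topology : IsTopology Yopen.
Proof.
  split; [|split].
  - left; auto.
  - intros O HO. destruct (classic (exists V, O V /\ exists x, V x)) as [[V [OV [x Vx]]]|Hn].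
    + left. intro y. exists V. split; auto. destruct (HO V OV) as [H|H]; auto.
      exfalso; apply (H x); auto.
    + right. intros x [V [OV Vx]]. apply Hn. eauto.
  - intros U V [HU|HU] [HV|HV]; [left; auto | right.. ]; intros x [Ux Vx];
      [apply (HV x) | apply (HU x) | apply (HU x)]; auto.
Qed.

Lemma Y_circulation : IsCirculation Yopen Ycirc.
Proof.
  split.
  - intros V HV. split; [|split].
    + intros x y [H _]. auto.
    + intros x Vx. split; [|apply Rrel_refl]. destruct HV as [H|H]; auto.
      exfalso; apply (H x); auto.
    + intros x y z [H1 R1] [_ R2]. split; auto. eapply Rrel_trans; eauto.
  - intros O HO x y. split.
    + intros [Hf R]. destruct (Hf x) as [V [OV Vx]]. apply t_step. exists V.
      split; auto. split; auto. destruct (HO V OV) as [H|H]; auto.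
      exfalso; apply (H x); auto.
    + induction 1 as [a b [V [OV [Hf R]]]|a b c _ [Hf R1] _ [_ R2]].
      * split; auto. intro z. exists V; auto.
      * split; auto. eapply Rrel_trans; eauto.
Qed.

(* The identity |X| -> Y is a stream map, by the universal property of the
   stream realization: on a cell, the circulation of the whole cube is the
   coordinatewise order, which Rrel contains. *)
Lemma id_Ymap : stream_map (realS C) Ystr (fun x : realpt X => x).
Proof.
  destruct HC as [_ [_ Huniv]]. apply Huniv; [split; [apply Y_topology | apply Y_circulation]|].
  intro s. split.
  - intros V [HV|HV] t Ht; exists 1; split; try lra; intros; [apply HV | exfalso; eapply HV; eauto].
  - intros V [HV|HV] t t' H.
    + split; auto. apply cube_Rrel, P_full_le.
      replace (fun _ : cube_pt (dim s) => True) with (fun z => V (real X s z)); auto.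
      extensionality z. apply propositional_extensionality. split; auto.
    + exfalso. destruct (HP (dim s)) as [[Hc1 _] _].
      assert (Ho : cube_open (fun z : cube_pt (dim s) => V (real X s z))).
      { intros z Hz. exfalso; eapply HV; eauto. }
      destruct (Hc1 _ Ho) as [Hf _]. destruct (Hf t t' H) as [Ht _]. eapply HV; eauto.
Qed.

Lemma dipath_Rrel (alpha : I -> realpt X) (u v : I) :
  dipath C alpha -> proj1_sig u <= proj1_sig v -> Rrel (alpha u) (alpha v).
Proof.
  intros [_ Ha] Huv. destruct id_Ymap as [_ Hy].
  assert (Hfull : real_open (fun _ : realpt X => True))
    by (intros s t _; exists 1; split; auto; lra).
  assert (Hc : C (fun _ => True) (alpha u) (alpha v))
    by (apply (Ha (fun _ => True) Hfull); split; auto).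
  exact (proj2 (Hy (fun _ => True) (or_introl (fun _ => Logic.I)) _ _ Hc)).
Qed.

(* A non-constant dipath loop strictly increases Rrel somewhere: otherwise
   the height would increase strictly around the loop. *)
Lemma loop_sreach (alpha : I -> realpt X) :
  dipath C alpha -> nonconst alpha -> alpha I0 = alpha I1 ->
  sreach C (low (alpha I0)) (low (alpha I1)).
Proof.
  intros Ha [u [v Huv]] Hloop. assert (HCc := proj1 HC).
  assert (Hw : exists w, alpha w <> alpha I0).
  { destruct (classic (alpha u = alpha I0)) as [E|E]; [exists v | exists u]; congruence. }
  destruct Hw as [w Hw]. assert (Hw01 := Iv w).
  destruct (dipath_Rrel alpha I0 w Ha ltac:(simpl; lra)) as [S1|[E1 H1]].
  - eapply sreach_trans_l; eauto. apply Rrel_reach, dipath_Rrel; auto. simpl; lra.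
  - destruct (dipath_Rrel alpha w I1 Ha ltac:(simpl; lra)) as [S2|[E2 H2]].
    + rewrite E1; auto.
    + exfalso. rewrite <- Hloop in H2.
      destruct H1 as [H1|H1]; [congruence|]. destruct H2 as [H2|H2]; [congruence|]. lra.
Qed.

Lemma cellular_dipath_between (alpha : I -> realpt X) :
  dipath C alpha -> exists beta,
    cell_path C (low (alpha I0)) (low (alpha I1)) beta /\
    (nonconst alpha -> alpha I0 = alpha I1 -> nonconst beta).
Proof.
  intro Ha. destruct (classic (nonconst alpha /\ alpha I0 = alpha I1)) as [[Hn Hl]|Hno].
  - destruct (loop_sreach alpha Ha Hn Hl) as [beta [Hb Nb]]. exists beta; auto.
  - destruct (Rrel_reach _ _ (dipath_Rrel alpha I0 I1 Ha ltac:(simpl; lra))) as [beta Hb].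
    exists beta. split; auto. intros; exfalso; auto.
Qed.
End Cells.

Section Homotopy.
Variable X : PCSet.

(* Two paths are freely homotopic as soon as a path gamma joins the start of
   the first to the start of the second: slide a window of the parameter
   along the concatenation (reverse alpha) . gamma . beta. *)
Definition slide (a b : R) : R := (1 - b) * (1 - a) / 4 + b * (1 + a) / 2.

Lemma homotopic_joined (alpha beta gamma : I -> realpt X) :
  path_cont alpha -> path_cont beta -> path_cont gamma ->
  gamma I0 = alpha I0 -> gamma I1 = beta I0 -> homotopic alpha beta.
Proof.
  intros ca cb cg E0 E1.
  set (rev := fun u : I => alpha (mkI (1 - proj1_sig u))).
  set (L := concat (concat rev gamma) beta).
  assert (J1 : rev I1 = gamma I0).
  { unfold rev; simpl. rewrite E0, Rminus_diag, mkI_0. reflexivity. }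
  assert (J2 : concat rev gamma I1 = beta I0) by (rewrite concat_I1; auto).
  assert (cL : path_cont L).
  { apply concat_cont; auto. apply concat_cont; auto.
    apply (path_cont_reparam X alpha (fun r => 1 - r) 1 ca); [lra|]. intros r r'.
    replace (1 - r - (1 - r')) with (- (r - r')) by ring. rewrite Rabs_Ropp. lra. }
  exists (fun s t => L (mkI (slide (proj1_sig s) (proj1_sig t)))). split; [|split].
  - intros U HU s t Hst.
    destruct (cL U HU _ Hst) as [e [He H]]. exists (e / 2). split; [lra|].
    intros s' t' Hs Ht. apply H.
    assert (Hsv := Iv s). assert (Htv := Iv t). assert (Hsv' := Iv s'). assert (Htv' := Iv t').
    apply Rabs_def2 in Hs. apply Rabs_def2 in Ht.
    unfold slide. rewrite !mkI_val by nra. apply Rabs_def1; nra.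
  - intro s. assert (Hsv := Iv s). change (proj1_sig I0) with 0.
    set (v := mkI (1 - proj1_sig s)).
    assert (Hv : proj1_sig v = 1 - proj1_sig s) by (apply mkI_val; lra).
    assert (E : mkI (slide (proj1_sig s) 0) = mkI (proj1_sig (mkI (proj1_sig v / 2)) / 2)).
    { f_equal. rewrite mkI_val, Hv; [unfold slide; field | lra]. }
    unfold L. rewrite E, !concat_left. unfold rev. rewrite Hv.
    replace (1 - (1 - proj1_sig s)) with (proj1_sig s) by ring. apply f_equal, mkI_proj.
  - intro s. assert (Hsv := Iv s). unfold slide; simpl.
    replace ((1 - 1) * (1 - proj1_sig s) / 4 + 1 * (1 + proj1_sig s) / 2)
      with ((1 + proj1_sig s) / 2) by field.
    unfold L. apply concat_right; auto.
Qed.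

Definition to_vertex {s : cube X} (t : cube_pt (dim s)) (u : I) : realpt X :=
  realL X s (map (fun r => (1 - proj1_sig u) * r) (cp t)).

Section ToVertex.
Variables (s : cube X) (t : cube_pt (dim s)).

Let scaled_len (u : I) : length (map (fun r => (1 - proj1_sig u) * r) (cp t)) = dim s.
Proof. rewrite length_map; apply cp_len. Qed.

Let scaled_rng (u : I) : Forall rng (map (fun r => (1 - proj1_sig u) * r) (cp t)).
Proof.
  assert (H := Iv u). generalize (cp_rng t). generalize (cp t).
  induction 1 as [|r l Hr _ IH]; simpl; constructor; auto. unfold rng. nra.
Qed.

Lemma to_vertex_cont : path_cont (to_vertex t).
Proof.
  intros U HU x Hx. destruct (HU s _ Hx) as [e [He H]]. exists e. split; auto.
  intros y Hy. apply H. rewrite !cp_cube_of by (apply scaled_len || apply scaled_rng).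
  assert (Hr := cp_rng t). clear -Hy Hr He.
  induction Hr as [|r l Hr _ IH]; simpl; constructor; auto.
  replace ((1 - proj1_sig y) * r - (1 - proj1_sig x) * r)
    with ((proj1_sig x - proj1_sig y) * r) by ring.
  rewrite Rabs_mult, (Rabs_right r), Rabs_minus_sym by lra.
  assert (0 <= Rabs (proj1_sig y - proj1_sig x)) by apply Rabs_pos. nra.
Qed.

Lemma to_vertex_I0 : to_vertex t I0 = real X s t.
Proof.
  unfold to_vertex. rewrite <- realL_real. f_equal.
  rewrite (map_ext _ (fun r => r)) by (intro; simpl; ring). apply map_id.
Qed.

Lemma to_vertex_I1 : to_vertex t I1 = vertex s.
Proof.
  unfold to_vertex, vertex, realL. apply real_ext.
  rewrite cp_cube_of by (apply (scaled_len I1) || apply (scaled_rng I1)).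
  rewrite (map_ext _ (fun _ => 0)) by (intro; simpl; ring).
  rewrite map_const, cp_len. reflexivity.
Qed.
End ToVertex.
End Homotopy.

Theorem mainTheorem6 (X : PCSet)
  (P : forall n, (cube_pt n -> Prop) -> cube_pt n -> cube_pt n -> Prop)
  (HP : forall n, IsProductCirc (P n))
  (C : (realpt X -> Prop) -> realpt X -> realpt X -> Prop)
  (HC : IsRealCirc P C)
  (alpha : I -> realpt X) (Halpha : dipath C alpha) :
  exists beta : I -> realpt X,
    dipath C beta /\
    (forall s s' : cube X, IsSupp (alpha I0) s -> IsSupp (alpha I1) s' ->
       beta I0 = vertex s /\ beta I1 = vertex s') /\
    cellular beta /\
    homotopic alpha beta /\
    (nonconst alpha -> alpha I0 = alpha I1 -> nonconst beta).
Proof.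
  destruct (cellular_dipath_between X P HP C HC alpha Halpha)
    as [beta [[Hd [Hc [B0 B1]]] Hn]].
  exists beta. split; [exact Hd|]. split; [|split; [exact Hc | split; [|exact Hn]]].
  -
    intros s s' H0 H1. unfold low in B0, B1.
    rewrite (supp_spec X _ _ H0), (supp_spec X _ _ H1). auto.
  - (* homotopy: a segment in supp(alpha 0) joins the starts of alpha and beta *)
    destruct (supp_rep X (alpha I0)) as [t0 Et0].
    apply homotopic_joined with (to_vertex X t0);
      [eapply dipath_cont; eauto .. | apply to_vertex_cont | |].
    + rewrite to_vertex_I0. auto.
    + rewrite to_vertex_I1, B0. reflexivity.
Qed.
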